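(* Let $Q=(G\leftleftarrows A)$ be a group-like graph. Then the bialgebra $(\mathbf k[A]\xrightarrow{\phi}\mathbf k[G])$ in $\mathcal{LM}$ (with $\phi(a)=t(a)-s(a)$, bimodule structure from the two-sided $G$-action on $A$, $\Delta_0(g)=g\otimes g$, $\Delta_1(a)=a\otimes t(a)+s(a)\otimes a$) is a Hopf algebra in $\mathcal{LM}$, with antipode given by $S_0(g)=g^{-1}$ on $\mathbf k[G]$ and $S_1(a)=-s(a)^{-1}\cdot a\cdot t(a)^{-1}$ on $\mathbf k[A]$.
   Context: A group-like graph is a directed graph $(G\overset{s}{\underset{t}{\leftleftarrows}}A)$ with an associative morphism $\mu$ from its Cartesian square (vertices $G\times G$, arrows $A\times G\sqcup G\times A$) to itself, such that the induced semigroup structure on $G$ is a group; $\mu$ gives left and right actions of $G$ on $A$ compatible with $s,t$ (e.g. $s(g\cdot a)=gs(a)$, $t(a\cdot g)=t(a)g$). Over a field $\mathbf k$ of characteristic $0$, the category $\mathcal{LM}$ has objects linear maps $U\to V$ and tensor product $(U\xrightarrow{f}V)\otimes(U'\xrightarrow{f'}V')=(U\otimes V'+V\otimes U'\to V\otimes V')$. A bialgebra in $\mathcal{LM}$ is $(\mathcal A\xrightarrow{f}\mathcal H)$ with $\mathcal H$ a bialgebra (coproduct $\Delta_0$), $\mathcal A$ an $\mathcal H$-bimodule, $f$ a bimodule map, and a bimodule map $\Delta_1:\mathcal A\to\mathcal A\otimes\mathcal H+\mathcal H\otimes\mathcal A$ with $\Delta_0 f=(f\otimes\mathrm{Id}+\mathrm{Id}\otimes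 f)\Delta_1$. It is a Hopf algebra if there are an antipode $S_0$ of $\mathcal H$ and a linear map $S_1:\mathcal A\to\mathcal A$ with $f S_1=S_0 f$ such that $\mu\circ(S_1\otimes\mathrm{Id}_{\mathcal H}+S_0\otimes\mathrm{Id}_{\mathcal A})\circ\Delta_1=\mu\circ(\mathrm{Id}_{\mathcal A}\otimes S_0+\mathrm{Id}_{\mathcal H}\otimes S_1)\circ\Delta_1=0$, where $\mu$ denotes the bimodule actions $\mathcal A\otimes\mathcal H+\mathcal H\otimes\mathcal A\to\mathcal A$. *)

From HB Require Import structures.
From mathcomp Require Import all_boot all_order all_algebra finmap.
From mathcomp Require Import monalg.

Set Implicit Arguments.
Unset Strict Implicit.
Unset Printing Implicit Defensive.

Import GRing.Theory.
Local Open Scope ring_scope.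

(* Group-like graphs.  G is the group of vertices (the semigroup structure  *)
(* induced by mu on vertices), A the set of arrows, s t source and target,  *)
(* lact g a = mu(g,a) (arrow (g,a) of G x A) and ract a g = mu(a,g).        *)
(* The fields express that mu is a morphism of graphs from the Cartesian    *)
(* square to Q (compatibility with s, t, and with the group law on          *)
(* vertices) and that mu is associative on arrows of the Cartesian cube     *)
(* (types (g,h,a), (g,a,h), (a,g,h)).  The unit axioms make k[A] a unital   *)
(* k[G]-bimodule.                                   *)
Record group_like_graph (G : groupType) (A : choiceType) := GroupLikeGraph {
  src : A -> G;
  tgt : A -> G;
  lact : G -> A -> A;
  ract : A -> G -> A;
  src_lact : forall g a, src (lact g a) = (g * src a)%g;
  tgt_lact : forall g a, tgt (lact g a) = (g * tgt a)%g;
  src_ract : forall a g, src (ract a g) = (src a * g)%g;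
  tgt_ract : forall a g, tgt (ract a g) = (tgt a * g)%g;
  lactA : forall g h a, lact (g * h)%g a = lact g (lact h a);
  lractA : forall g a h, ract (lact g a) h = lact g (ract a h);
  ractA : forall a g h, ract a (g * h)%g = ract (ract a g) h;
  lact1 : forall a, lact 1%g a = a;
  ract1 : forall a, ract a 1%g = a
}.

(* Tensor products of free spaces are identified with free spaces on        *)
(* products: k[X] (x) k[Y] = k[X * Y], and direct sums with free spaces on  *)
(* sums: k[X] + k[Y] = k[X + Y].                                            *)
Section FreeLinear.
Variable k : fieldType.

Definition lin (X : choiceType) (V : lmodType k) (f : X -> V)
    (u : {malg k[X]}) : V :=
  \sum_(x <- msupp u) u@_x *: f x.

Definition tmul (X Y : choiceType) (u : {malg k[X]}) (v : {malg k[Y]})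
    : {malg k[(X * Y)%type]} :=
  \sum_(x <- msupp u) \sum_(y <- msupp v) (u@_x * v@_y) *: << (x, y) >>.

Definition tens (X Y X' Y' : choiceType)
    (F : {malg k[X]} -> {malg k[X']}) (F' : {malg k[Y]} -> {malg k[Y']})
    : {malg k[(X * Y)%type]} -> {malg k[(X' * Y')%type]} :=
  lin (fun p : X * Y => tmul (F << p.1 >>) (F' << p.2 >>)).

Definition inl_lin (X Y : choiceType) : {malg k[X]} -> {malg k[(X + Y)%type]} :=
  lin (fun x : X => << (inl x : X + Y) >>).
Definition inr_lin (X Y : choiceType) : {malg k[Y]} -> {malg k[(X + Y)%type]} :=
  lin (fun y : Y => << (inr y : X + Y) >>).

Definition dsum (X Y X' Y' : choiceType)
    (F : {malg k[X]} -> {malg k[X']}) (F' : {malg k[Y]} -> {malg k[Y']})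
    : {malg k[(X + Y)%type]} -> {malg k[(X' + Y')%type]} :=
  lin (fun z : X + Y => match z with
                        | inl x => inl_lin Y' (F << x >>)
                        | inr y => inr_lin X' (F' << y >>)
                        end).

End FreeLinear.

Section GroupLikeHopf.
Variables (k : fieldType) (G : groupType) (A : choiceType)
          (Q : group_like_graph G A).

Local Notation s := (src Q).
Local Notation t := (tgt Q).

Definition glg_phi : {malg k[A]} -> {malg k[G]} :=
  lin (fun a => << t a >> - << s a >>).

Definition glg_mulH : {malg k[(G * G)%type]} -> {malg k[G]} :=
  lin (fun p : G * G => << (p.1 * p.2)%g >>).

Definition glg_unitH : {malg k[G]} := << 1%g >>.

Definition glg_eps (u : {malg k[G]}) : k :=
  (lin (fun _ : G => (1 : k^o)) u : k).

Definition glg_Delta0 : {malg k[G]} -> {malg k[(G * G)%type]} :=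
  lin (fun g : G => << (g, g) >>).

Definition glg_Delta1 : {malg k[A]} -> {malg k[((A * G) + (G * A))%type]} :=
  lin (fun a : A => << (inl (a, t a) : (A * G) + (G * A)) >>
                  + << (inr (s a, a) : (A * G) + (G * A)) >>).

Definition glg_mu : {malg k[((A * G) + (G * A))%type]} -> {malg k[A]} :=
  lin (fun z : (A * G) + (G * A) => match z with
                    | inl p => << ract Q p.1 p.2 >>
                    | inr p => << lact Q p.1 p.2 >>
                    end).

Definition glg_S0 : {malg k[G]} -> {malg k[G]} :=
  lin (fun g : G => << (g^-1)%g >>).

Definition glg_S1 : {malg k[A]} -> {malg k[A]} :=
  lin (fun a : A => - << lact Q ((s a)^-1)%g (ract Q a ((t a)^-1)%g) >>).

End GroupLikeHopf.

From HB Require Import structures.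
From mathcomp Require Import all_boot all_order all_algebra finmap.
From mathcomp Require Import monalg.

Set Implicit Arguments.
Unset Strict Implicit.
Unset Printing Implicit Defensive.

Import GRing.Theory.
Local Open Scope ring_scope.

(* Every structure map is a linear extension [lin] of its values on basis
   vectors, and a composite of linear extensions is the linear extension of
   the composite on basis vectors, so each identity reduces to basis
   elements.  For a vertex g these are g^-1 g = 1 = g g^-1.  For an arrow a,
   the arrow a' := s(a)^-1 . a . t(a)^-1 goes from t(a)^-1 to s(a)^-1 and
   satisfies a' . t(a) = s(a)^-1 . a and s(a) . a' = a . t(a)^-1 by
   associativity of the actions, which makes the two terms of each antipode
   identity cancel. *)

Section LinearExtension.
Variable k : fieldType.
Implicit Types (X Y : choiceType) (V : lmodType k).

Lemma lin_fsubset X V (f : X -> V) (u : {malg k[X]}) (d : {fset X}) :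
  (msupp u `<=` d)%fset -> lin f u = \sum_(x <- d) u@_x *: f x.
Proof.
move=> le_ud; rewrite /lin (big_fset_incl _ le_ud) //= => x _ /mcoeff_outdom ->.
by rewrite scale0r.
Qed.

Lemma lin_is_linear X V (f : X -> V) : linear (lin f).
Proof.
move=> c u v; set d := (msupp u `|` msupp v)%fset.
have le_ud : (msupp u `<=` d)%fset by apply: fsubsetUl.
have le_vd : (msupp v `<=` d)%fset by apply: fsubsetUr.
have le_cuvd : (msupp (c *: u + v) `<=` d)%fset.
  apply: fsubset_trans (msuppD_le _ _) _.
  exact: fsetSU (fsubset_trans (msuppZ_le _ _) _).
rewrite (lin_fsubset _ le_ud) (lin_fsubset _ le_vd) (lin_fsubset _ le_cuvd).
rewrite scaler_sumr -big_split; apply: eq_bigr => x _.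
by rewrite mcoeffD mcoeffZ scalerDl scalerA.
Qed.

HB.instance Definition _ X V (f : X -> V) :=
  GRing.isLinear.Build k {malg k[X]} V *:%R (lin f) (lin_is_linear f).

(* Restated with [lin f] as head, so that [linU] can rewrite the results. *)
Lemma linD X V (f : X -> V) : {morph lin f : u v / u + v}.
Proof. exact: raddfD. Qed.

Lemma linN X V (f : X -> V) : {morph lin f : u / - u}.
Proof. exact: raddfN. Qed.

Lemma linB X V (f : X -> V) : {morph lin f : u v / u - v}.
Proof. exact: raddfB. Qed.

Lemma linU X V (f : X -> V) (x : X) : lin f << x >> = f x.
Proof. by rewrite (lin_fsubset _ msuppU_le) big_seq_fset1 mcoeffUU scale1r. Qed.

Lemma lin_comp X Y V (f : X -> {malg k[Y]}) (g : Y -> V) (u : {malg k[X]}) :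
  lin g (lin f u) = lin (fun x => lin g (f x)) u.
Proof. by rewrite [lin f u]/lin linear_sum; apply: eq_bigr => x _; rewrite linearZ. Qed.

Lemma eq_lin X V (f g : X -> V) : f =1 g -> lin f =1 lin g.
Proof. by move=> eq_fg u; apply: eq_bigr => x _; rewrite eq_fg. Qed.

Lemma lin_eq0 X V (f : X -> V) : f =1 (fun=> 0) -> lin f =1 (fun=> 0).
Proof. by move=> f0 u; rewrite (eq_lin f0); apply: big1 => x _; rewrite scaler0. Qed.

Lemma lin_scaler X V (f : X -> k^o) (v : V) (u : {malg k[X]}) :
  (lin f u : k) *: v = lin (fun x => (f x : k) *: v) u.
Proof. by rewrite scaler_suml; apply: eq_bigr => x _; rewrite scalerA. Qed.

Lemma tmulUU X Y (x : X) (y : Y) :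
  tmul << x >> << y >> = << (x, y) >> :> {malg k[(X * Y)%type]}.
Proof.
rewrite /tmul msuppU oner_eq0 big_seq_fset1 msuppU oner_eq0 big_seq_fset1.
by rewrite !mcoeffUU mulr1 scale1r.
Qed.

Lemma tmulNl X Y (u : {malg k[X]}) (v : {malg k[Y]}) : tmul (- u) v = - tmul u v.
Proof.
rewrite /tmul msuppN -sumrN; apply: eq_bigr => x _.
by rewrite -sumrN; apply: eq_bigr => y _; rewrite mcoeffN mulNr scaleNr.
Qed.

Lemma tmulNr X Y (u : {malg k[X]}) (v : {malg k[Y]}) : tmul u (- v) = - tmul u v.
Proof.
rewrite /tmul msuppN -sumrN; apply: eq_bigr => x _.
by rewrite -sumrN; apply: eq_bigr => y _; rewrite mcoeffN mulrN scaleNr.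
Qed.

End LinearExtension.

Section GroupLikeGraph.
Variables (G : groupType) (A : choiceType) (Q : group_like_graph G A).

Local Notation s := (src Q).
Local Notation t := (tgt Q).

Definition opp_arrow (a : A) : A := (lact Q (s a)^-1 (ract Q a (t a)^-1))%g.

Lemma src_opp_arrow a : s (opp_arrow a) = ((t a)^-1)%g.
Proof. by rewrite src_lact src_ract mulgA mulVg mul1g. Qed.

Lemma tgt_opp_arrow a : t (opp_arrow a) = ((s a)^-1)%g.
Proof. by rewrite tgt_lact tgt_ract mulgV mulg1. Qed.

Lemma ract_opp_arrow a : ract Q (opp_arrow a) (t a) = (lact Q (s a)^-1 a)%g.
Proof. by rewrite lractA -ractA mulVg ract1. Qed.

Lemma lact_opp_arrow a : lact Q (s a) (opp_arrow a) = (ract Q a (t a)^-1)%g.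
Proof. by rewrite -lactA mulgV lact1. Qed.

End GroupLikeGraph.

Section GroupLikeHopf.
Variables (k : fieldType) (G : groupType) (A : choiceType) (Q : group_like_graph G A).

Local Notation S0 := (@glg_S0 k G).
Local Notation S1 := (@glg_S1 k G A Q).

Lemma glg_S0U g : S0 << g >> = << (g^-1)%g >>.
Proof. exact: linU. Qed.

Lemma glg_S1U a : S1 << a >> = - << opp_arrow Q a >>.
Proof. exact: linU. Qed.

Lemma glg_S0_antipode_l (x : {malg k[G]}) :
  glg_mulH (tens S0 id (glg_Delta0 x)) = glg_eps x *: glg_unitH k G.
Proof.
rewrite /glg_mulH /tens /glg_Delta0 /glg_eps lin_scaler !lin_comp.
by apply: eq_lin => g /=; rewrite !linU /= glg_S0U tmulUU linU mulVg scale1r.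
Qed.

Lemma glg_S0_antipode_r (x : {malg k[G]}) :
  glg_mulH (tens id S0 (glg_Delta0 x)) = glg_eps x *: glg_unitH k G.
Proof.
rewrite /glg_mulH /tens /glg_Delta0 /glg_eps lin_scaler !lin_comp.
by apply: eq_lin => g /=; rewrite !linU /= glg_S0U tmulUU linU mulgV scale1r.
Qed.

Lemma glg_phi_S1 (v : {malg k[A]}) : glg_phi Q (S1 v) = S0 (glg_phi Q v).
Proof.
rewrite /glg_phi /glg_S1 /glg_S0 !lin_comp; apply: eq_lin => a /=.
by rewrite linN linU src_opp_arrow tgt_opp_arrow linB !linU opprB.
Qed.

Lemma glg_S1_antipode_l (v : {malg k[A]}) :
  glg_mu Q (dsum (tens S1 id) (tens S0 id) (glg_Delta1 Q v)) = 0.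
Proof.
rewrite /glg_mu /dsum /glg_Delta1 !lin_comp; apply: lin_eq0 => a /=.
rewrite linD !linU /tens !linU /= glg_S1U glg_S0U tmulNl !tmulUU /inl_lin /inr_lin.
by rewrite !(linN, linU) /= ract_opp_arrow addNr.
Qed.

Lemma glg_S1_antipode_r (v : {malg k[A]}) :
  glg_mu Q (dsum (tens id S0) (tens id S1) (glg_Delta1 Q v)) = 0.
Proof.
rewrite /glg_mu /dsum /glg_Delta1 !lin_comp; apply: lin_eq0 => a /=.
rewrite linD !linU /tens !linU /= glg_S1U glg_S0U tmulNr !tmulUU /inl_lin /inr_lin.
by rewrite !(linN, linU) /= lact_opp_arrow subrr.
Qed.

End GroupLikeHopf.

Theorem mainTheorem8 (k : fieldType) (Hk : [pchar k] =i pred0)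
    (G : groupType) (A : choiceType) (Q : group_like_graph G A) :
  (* S_0 is an antipode of the bialgebra k[G] *)
  (forall x : {malg k[G]},
      glg_mulH (tens (@glg_S0 k G) id (@glg_Delta0 k G x))
      = glg_eps x *: glg_unitH k G) /\
  (forall x : {malg k[G]},
      glg_mulH (tens id (@glg_S0 k G) (@glg_Delta0 k G x))
      = glg_eps x *: glg_unitH k G) /\
  (* f S_1 = S_0 f *)
  (forall v : {malg k[A]},
      glg_phi Q (@glg_S1 k G A Q v) = @glg_S0 k G (glg_phi Q v)) /\
  (* mu o (S_1 (x) Id_H + S_0 (x) Id_A) o Delta_1 = 0 *)
  (forall v : {malg k[A]},
      glg_mu Q (dsum (tens (@glg_S1 k G A Q) id) (tens (@glg_S0 k G) id)
                     (glg_Delta1 Q v)) = 0) /\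
  (* mu o (Id_A (x) S_0 + Id_H (x) S_1) o Delta_1 = 0 *)
  (forall v : {malg k[A]},
      glg_mu Q (dsum (tens id (@glg_S0 k G)) (tens id (@glg_S1 k G A Q))
                     (glg_Delta1 Q v)) = 0).
Proof.
split; [exact: glg_S0_antipode_l | split; [exact: glg_S0_antipode_r |]].
split; [exact: glg_phi_S1 | split; [exact: glg_S1_antipode_l | exact: glg_S1_antipode_r]].
Qed.
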